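(* Let $k\ge2$ and let $(a(n))_{n\ge0}$ and $(b(n))_{n\ge0}$ be $k$-automatic sequences. Then the sequence $(c(n))_{n\ge0}$ defined by $c(n)=1$ if $a(nk^\lambda+s)=b(nk^\lambda+s)$ for all integers $\lambda\ge0$ and $0\le s<k^\lambda$, and $c(n)=0$ otherwise, is $k$-automatic.
   Context: A sequence $u$ on a finite alphabet is $k$-automatic if there is a finite set of states $Q$, a map $\delta:Q\times\{0,\dots,k-1\}\to Q$ extended to words letter by letter, an initial state $q_0$ and an output map $\tau$ such that $u(n)=\tau(\delta(q_0,(n)_k))$ for all $n\ge0$, where $(n)_k$ is the base-$k$ expansion of $n$ (most significant digit first; $(0)_k$ is the empty word). *)

From mathcomp Require Import all_boot.
Set Implicit Arguments. Unset Strict Implicit. Unset Printing Implicit Defensive.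

(* Base-k expansion of n, least significant digit first; empty for n = 0.
   Fuel n suffices since digits strictly decrease n (k >= 2). *)
Fixpoint base_rev_aux (k fuel n : nat) : seq nat :=
  match fuel with
  | 0 => [::]
  | fuel'.+1 => if n == 0 then [::] else (n %% k) :: base_rev_aux k fuel' (n %/ k)
  end.

Definition base_expansion (k n : nat) : seq nat := rev (base_rev_aux k n n).

(* Digits fed to delta are always < k, so delta : Q -> nat -> Q is only
   relevant on {0,...,k-1}; this is equivalent to delta : Q * {0..k-1} -> Q. *)
Definition automatic (k : nat) (A : Type) (u : nat -> A) : Prop :=
  exists (Q : finType) (delta : Q -> nat -> Q) (q0 : Q) (tau : Q -> A),
    forall n : nat,
      u n = tau (foldl (fun q (d : nat) => delta q d) q0 (base_expansion k n)).

From mathcomp Require Import all_boot.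
From Stdlib Require Import ClassicalEpsilon.

(* The base-k expansion of n k^l + s (s < k^l, n > 0) is that of n followed
   by the l low-order digits of s, so the states two automata reach on any such
   number are determined by the states they reach on n.  Hence c(n), for n > 0,
   is a function of the pair of states reached on (n)_k, and c is computed by
   the product automaton, given a fresh initial state to isolate n = 0. *)

Section BaseExpansion.
Variable k : nat.
Hypothesis k_gt1 : 1 < k.

Lemma base_rev_aux_fuel f1 f2 n : n <= f1 -> n <= f2 ->
  base_rev_aux k f1 n = base_rev_aux k f2 n.
Proof.
elim: f1 f2 n => [|f1 IH] [|f2] [|n] //= n_le1 n_le2.
congr (_ :: _); apply: IH; rewrite -ltnS;
  [apply: leq_trans n_le1 | apply: leq_trans n_le2]; exact: ltn_Pdiv.
Qed.

Lemma base_expansion_rcons n : 0 < n ->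
  base_expansion k n = rcons (base_expansion k (n %/ k)) (n %% k).
Proof.
case: n => [//|n] _; rewrite /base_expansion /= rev_cons.
congr (rcons (rev _) _); apply: base_rev_aux_fuel => //.
by rewrite -ltnS; exact: ltn_Pdiv.
Qed.

Fixpoint low_digits (l s : nat) : seq nat :=
  if l is l'.+1 then rcons (low_digits l' (s %/ k)) (s %% k) else [::].

Lemma base_expansion_shift n l s : 0 < n -> s < k ^ l ->
  base_expansion k (n * k ^ l + s) = base_expansion k n ++ low_digits l s.
Proof.
move=> n_gt0; elim: l s => [|l IH] s s_lt.
  by move: s_lt; rewrite expn0 ltnS leqn0 => /eqP->; rewrite muln1 addn0 cats0.
have k_gt0 : 0 < k by apply: ltnW.
rewrite base_expansion_rcons ?ltn_addr ?muln_gt0 ?n_gt0 ?expn_gt0 ?k_gt0 //.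
rewrite expnSr mulnA modnMDl divnMDl // IH ?rcons_cat //.
by rewrite ltn_divLR // -expnSr.
Qed.

End BaseExpansion.

Section InvariantOnRuns.
Variables (k : nat) (Q : finType) (delta : Q -> nat -> Q) (q0 : Q).
Hypothesis k_gt1 : 1 < k.

Let run n := foldl delta q0 (base_expansion k n).

(* [None] is a copy of [q0] that only the empty word reaches. *)
Let delta' (q : option Q) (d : nat) : option Q := Some (delta (odflt q0 q) d).

Lemma foldl_odflt_delta' q w :
  odflt q0 (foldl delta' q w) = foldl delta (odflt q0 q) w.
Proof. by elim: w q => [|d w IH] q //=; rewrite IH. Qed.

Lemma foldl_delta'_run n : 0 < n ->
  foldl delta' None (base_expansion k n) = Some (run n).
Proof.
move=> n_gt0; rewrite /run base_expansion_rcons // !foldl_rcons.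
by rewrite /delta' foldl_odflt_delta'.
Qed.

Lemma automatic_of_run_invariant (A : Type) (u : nat -> A) :
  (forall n n', 0 < n -> 0 < n' -> run n = run n' -> u n = u n') ->
  automatic k u.
Proof.
move=> u_inv.
pose reaches q m := 0 < m /\ run m = q.
pose witness q := epsilon (inhabits 0) (reaches q).
pose tau (q : option Q) := if q is Some q then u (witness q) else u 0.
exists (option Q), delta', None, tau => -[//|n].
rewrite foldl_delta'_run //=.
have [witness_gt0 run_witness] : reaches (run n.+1) (witness (run n.+1)).
  by apply: epsilon_spec; exists n.+1.
by apply: u_inv.
Qed.

End InvariantOnRuns.

Theorem lemma4p2 (k : nat) (A : eqType) (a b : nat -> A) (c : nat -> nat) :
  2 <= k -> automatic k a -> automatic k b ->
  (forall n : nat,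
     c n = 1 <-> (forall lam s : nat, s < k ^ lam ->
                    a (n * k ^ lam + s) = b (n * k ^ lam + s))) ->
  (forall n : nat, c n = 0 \/ c n = 1) ->
  automatic k c.
Proof.
move=> k_gt1 [Qa [da [qa [ta a_run]]]] [Qb [db [qb [tb b_run]]]] c_def c01.
pose delta (q : Qa * Qb) d := (da q.1 d, db q.2 d).
have foldl_delta w qq : foldl delta qq w = (foldl da qq.1 w, foldl db qq.2 w).
  by elim: w qq => [|d w IH] [x y] //=; rewrite IH.
have c1_runs n : 0 < n -> c n = 1 <-> forall l s, s < k ^ l ->
    ta (foldl da (foldl da qa (base_expansion k n)) (low_digits k l s)) =
    tb (foldl db (foldl db qb (base_expansion k n)) (low_digits k l s)).
  move=> n_gt0; rewrite c_def.
  by split=> eq_ab l s s_lt; move: (eq_ab l s s_lt);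
    rewrite a_run b_run base_expansion_shift // !foldl_cat.
apply: (@automatic_of_run_invariant k _ delta (qa, qb)) => // n n' n_gt0 n'_gt0.
rewrite !foldl_delta => -[run_a run_b].
have c1_iff : c n = 1 <-> c n' = 1 by rewrite c1_runs // c1_runs // run_a run_b.
by case: (c01 n) (c01 n') c1_iff => -> [] -> []; intuition.
Qed.
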